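(* For the power network system described in the context, there exist a constant switching vector $\sigma^*\in\{0,1\}^{|\tilde{\mathcal L}|}$, an equilibrium of the system with $\sigma=\sigma^*$ (whose power command entries all equal a common value $p^{c,*}$), and $\zeta\in\mathbb R$ such that $p^{c,*}-\beta/K\le\zeta\le p^{c,*}$ and, for every $(l,j)\in\tilde{\mathcal L}$: $\sigma^*_{l,j}\in\{0\}$ if $\zeta>c_{l,j}/\overline d_{l,j}$; $\sigma^*_{l,j}\in\{0,\rho_{l,j}\}$ if $\zeta=c_{l,j}/\overline d_{l,j}$; $\sigma^*_{l,j}\in\{\rho_{l,j}\}$ if $|\zeta|<c_{l,j}/\overline d_{l,j}$; $\sigma^*_{l,j}\in\{\rho_{l,j},1\}$ if $\zeta=-c_{l,j}/\overline d_{l,j}$; $\sigma^*_{l,j}\in\{1\}$ if $\zeta<-c_{l,j}/\overline d_{l,j}$.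
   Context: Let $(\mathcal N,\mathcal E)$ be a connected directed graph (power network), bus set $\mathcal N=\{1,\dots,|\mathcal N|\}$, arbitrarily oriented ($(i,j)\in\mathcal E\Rightarrow(j,i)\notin\mathcal E$), $\mathcal N^p_j=\{k:(k,j)\in\mathcal E\}$, $\mathcal N^s_j=\{k:(j,k)\in\mathcal E\}$; $(\mathcal N,\tilde{\mathcal E})$ a connected directed graph (communication network). For $j\in\mathcal N$, $\mathcal L_j$ is a finite set of on-off loads, $\tilde{\mathcal L}=\{(l,j):l\in\mathcal L_j,j\in\mathcal N\}$; load $(l,j)$ has magnitude $\overline d_{l,j}>0$, state $\sigma_{l,j}\in\{0,1\}$, desired state $\rho_{l,j}\in\{0,1\}$ and cost constant $c_{l,j}$. $\beta=\max_{(l,j)\in\tilde{\mathcal L}}\overline d_{l,j}$. Constants $M_j,\gamma_j,\kappa_j,A_j,\tau_j>0$, $p^L_j\in\mathbb R$, $B_{ij}>0$, $\tau_{ij}>0$; $K=\sum_j\kappa_j$. Dynamics in state $(\eta,\omega,p^M,p^c,\psi)$: $\dot\eta_{ij}=\omega_i-\omega_j$, $(i,j)\in\mathcal E$; $M_j\dot\omega_j=p^M_j-p^L_j-A_j\omega_j-\sum_{l\in\mathcal L_j}\overline d_{l,j}\sigma_{l,j}-\sum_{k\in\mathcal N^s_j}B_{jk}\eta_{jk}+\sum_{i\in\mathcal N^p_j}B_{ij}\eta_{ij}$; $\gamma_j\dot p^M_j=-(p^M_j+\kappa_j\omega_j-\kappa_jp^c_j)$; $\tau_{ij}\dot\psi_{ij}=p^c_i-p^c_j$,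 $(i,j)\in\tilde{\mathcal E}$; $\tau_j\dot p^c_j=-p^M_j+p^L_j+\sum_{l\in\mathcal L_j}\overline d_{l,j}\sigma_{l,j}-\sum_{k:(j,k)\in\tilde{\mathcal E}}\psi_{jk}+\sum_{i:(i,j)\in\tilde{\mathcal E}}\psi_{ij}$. An equilibrium for fixed $\sigma$ is a state where all derivatives vanish; at any equilibrium all entries of $p^c$ coincide. *)

From HB Require Import structures.
From mathcomp Require Import all_boot all_order all_algebra.
Set Implicit Arguments. Unset Strict Implicit. Unset Printing Implicit Defensive.
Import Order.TTheory GRing.Theory Num.Theory.
Local Open Scope ring_scope.

Definition connected_digraph (n : nat) (E : rel 'I_n) : Prop :=
  forall i j : 'I_n, connect (fun x y => E x y || E y x) i j.

Definition oriented (n : nat) (E : rel 'I_n) : Prop :=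
  forall i j : 'I_n, E i j -> ~~ E j i.

Section Dynamics.
Variables (R : realFieldType) (n : nat) (L : finType).
(* Power network E, communication network Et; loads L located at bus [bus l],
   so that L_j = [set l | bus l == j] and (l, j) in tilde L iff bus l = j. *)
Variables (E Et : rel 'I_n) (bus : L -> 'I_n).
Variables (dbar : L -> R).
Variables (M gamma kappa A tau pL : 'I_n -> R).
Variables (B tauE : 'I_n -> 'I_n -> R).

Definition load_sum (sigma : L -> bool) (j : 'I_n) : R :=
  \sum_(l : L | bus l == j) dbar l * (sigma l)%:R.

(* Right-hand sides of the dynamics (time derivatives of the state
   (eta, omega, pM, pc, psi)); eta is indexed by edges of E and psi by
   edges of Et (values off the edges are irrelevant). *)
Definition d_eta (omega : 'I_n -> R) (i j : 'I_n) : R := omega i - omega j.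

Definition d_omega (sigma : L -> bool) (eta : 'I_n -> 'I_n -> R)
  (omega pM : 'I_n -> R) (j : 'I_n) : R :=
  (pM j - pL j - A j * omega j - load_sum sigma j
   - \sum_(k | E j k) B j k * eta j k
   + \sum_(i | E i j) B i j * eta i j) / M j.

Definition d_pM (omega pM pc : 'I_n -> R) (j : 'I_n) : R :=
  - (pM j + kappa j * omega j - kappa j * pc j) / gamma j.

Definition d_psi (pc : 'I_n -> R) (i j : 'I_n) : R := (pc i - pc j) / tauE i j.

Definition d_pc (sigma : L -> bool) (pM pc : 'I_n -> R)
  (psi : 'I_n -> 'I_n -> R) (j : 'I_n) : R :=
  (- pM j + pL j + load_sum sigma j
   - \sum_(k | Et j k) psi j k + \sum_(i | Et i j) psi i j) / tau j.

Definition equilibrium (sigma : L -> bool) (eta : 'I_n -> 'I_n -> R)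
  (omega pM pc : 'I_n -> R) (psi : 'I_n -> 'I_n -> R) : Prop :=
  [/\ forall i j, E i j -> d_eta omega i j = 0,
      forall j, d_omega sigma eta omega pM j = 0,
      forall j, d_pM omega pM pc j = 0,
      forall i j, Et i j -> d_psi pc i j = 0 &
      forall j, d_pc sigma pM pc psi j = 0].

End Dynamics.

(* beta = max over loads of dbar (all dbar > 0, so the 0 seed is harmless). *)
Definition beta_max (R : realFieldType) (L : finType) (dbar : L -> R) : R :=
  \big[Num.max/0]_(l : L) dbar l.

From mathcomp Require Import all_boot all_order all_algebra.
From mathcomp Require Import ring lra.
Set Implicit Arguments. Unset Strict Implicit. Unset Printing Implicit Defensive.
Import Order.TTheory GRing.Theory Num.Theory.
Local Open Scope ring_scope.

(* Take omega = 0, all p^c equal to a common value p and p^M_j = kappa_j p.  The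
   line flows B eta and the communication flows psi must then realise a prescribed
   net injection at every bus; on a connected graph such flows exist as soon as
   the injections sum to zero, i.e. K p = sum_j p^L_j + (switched-on load).
   It remains to choose the switched-on set S and zeta.  Let t_l be c_l/dbar_l if
   rho_l and -c_l/dbar_l otherwise; the switching rule says l is on when t_l > zeta
   and off when t_l < zeta.  Starting from S = all loads, repeatedly drop the load
   of S with the smallest threshold while that threshold lies below the resulting
   p; when this stops, either p itself or the last threshold is a valid zeta, and
   since one load changes p by at most beta/K, zeta lies in [p - beta/K, p]. *)

Section Divergence.
Variables (R : comPzRingType) (n : nat) (E : rel 'I_n).

Definition divergence (f : 'I_n -> 'I_n -> R) (j : 'I_n) : R :=
  \sum_(k | E j k) f j k - \sum_(i | E i j) f i j.

Definition is_divergence (b : 'I_n -> R) : Prop :=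
  exists f, forall j, divergence f j = b j.

Definition dipole (u v : 'I_n) (j : 'I_n) : R := (j == u)%:R - (j == v)%:R.

Lemma eq_is_divergence b b' : is_divergence b -> b =1 b' -> is_divergence b'.
Proof. by move=> [f Hf] eq_b; exists f => j; rewrite Hf eq_b. Qed.

Lemma is_divergence0 : is_divergence (fun _ => 0).
Proof. by exists (fun _ _ => 0) => j; rewrite /divergence !big1 ?subrr. Qed.

Lemma is_divergenceD b1 b2 :
  is_divergence b1 -> is_divergence b2 -> is_divergence (fun j => b1 j + b2 j).
Proof.
move=> [f1 Hf1] [f2 Hf2]; exists (fun x y => f1 x y + f2 x y) => j.
by rewrite -Hf1 -Hf2 /divergence !big_split /=; ring.
Qed.

Lemma is_divergenceZ a b : is_divergence b -> is_divergence (fun j => a * b j).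
Proof.
move=> [f Hf]; exists (fun x y => a * f x y) => j.
by rewrite -Hf /divergence -!mulr_sumr mulrBr.
Qed.

Lemma is_divergence_sum (s : seq 'I_n) (F : 'I_n -> 'I_n -> R) :
  (forall u, is_divergence (F u)) ->
  is_divergence (fun j => \sum_(u <- s) F u j).
Proof.
move=> divF; elim: s => [|u s IHs].
  by apply: (eq_is_divergence is_divergence0) => j; rewrite big_nil.
apply: (eq_is_divergence (is_divergenceD (divF u) IHs)) => j.
by rewrite big_cons.
Qed.

Lemma sum_indicator (T : finType) (P : pred T) (z : T) :
  \sum_(k | P k) ((k == z)%:R : R) = (P z)%:R.
Proof.
case Pz: (P z).
  by rewrite (bigD1 z) //= eqxx big1 ?addr0 // => k /andP[_ /negbTE ->].
by apply: big1 => k Pk; case: eqP => // k_z; rewrite -k_z Pk in Pz.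
Qed.

Lemma is_divergence_edge x z : E x z -> is_divergence (dipole x z).
Proof.
move=> Exz; exists (fun a b => (a == x)%:R * (b == z)%:R) => j.
rewrite /divergence /dipole /= -mulr_sumr sum_indicator.
under eq_bigr do rewrite mulrC.
rewrite -mulr_sumr sum_indicator.
by congr (_ - _); case: eqP => [->|_]; rewrite ?Exz ?mulr1 ?mul0r.
Qed.

Lemma is_divergence_dipole u v :
  connect (fun x y => E x y || E y x) u v -> is_divergence (dipole u v).
Proof.
move/connectP=> [p Hp ->]; elim: p u Hp => [|y p IHp] u /=.
  by move=> _; apply: (eq_is_divergence is_divergence0) => j; rewrite /dipole subrr.
move=> /andP[Euy /IHp div_yv].
have div_uy : is_divergence (dipole u y).
  case/orP: Euy => [Euy | Eyu]; first exact: is_divergence_edge.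
  apply: (eq_is_divergence (is_divergenceZ (-1) (is_divergence_edge Eyu))).
  by move=> j; rewrite /dipole; ring.
apply: (eq_is_divergence (is_divergenceD div_uy div_yv)).
by move=> j; rewrite /dipole; ring.
Qed.

Lemma balanced_is_divergence (b : 'I_n -> R) :
  connected_digraph E -> \sum_j b j = 0 -> is_divergence b.
Proof.
move=> connE sum_b0; case: (pickP (fun _ : 'I_n => true)) => [v _ | no_bus]; last first.
  by apply: (eq_is_divergence is_divergence0) => j; have := no_bus j.
have decomp j : \sum_u b u * dipole u v j = b j.
  rewrite /dipole; under eq_bigr do rewrite mulrBr.
  rewrite big_split /= sumrN -mulr_suml sum_b0 mul0r subr0.
  rewrite (bigD1 j) //= eqxx mulr1 big1 ?addr0 // => u u_j.
  by rewrite eq_sym (negbTE u_j) mulr0.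
apply: (eq_is_divergence _ decomp).
apply: is_divergence_sum => u; apply: is_divergenceZ.
exact: is_divergence_dipole.
Qed.

End Divergence.

Section ThresholdSelection.
Variables (R : realDomainType) (L : finType) (t w : L -> R) (a delta : R).
Hypotheses (delta_ge0 : 0 <= delta) (w_le_delta : forall l, w l <= delta).

Definition level (S : {set L}) : R := a + \sum_(l in S) w l.

Definition separates (S : {set L}) (zeta : R) : Prop :=
  [/\ forall l, l \notin S -> t l <= zeta,
      forall l, l \in S -> zeta <= t l &
      level S - delta <= zeta <= level S].

Definition admissible (S : {set L}) : Prop :=
  forall l, l \notin S -> t l <= level S /\ forall l', l' \in S -> t l <= t l'.

Lemma admissible_setT : admissible [set: L].
Proof. by move=> l; rewrite in_setT. Qed.

Lemma admissible_step S : admissible S ->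
  (exists zeta, separates S zeta) \/ exists2 S', admissible S' & (#|S'| < #|S|)%N.
Proof.
move=> admS.
have [/exists_inP [l0 l0S t_l0] | /exists_inPn above] :=
  boolP [exists l in S, t l < level S]; last first.
  left; exists (level S); split.
  - by move=> l /admS [].
  - by move=> l lS; rewrite leNgt above.
  - by rewrite lexx andbT lerBlDr lerDl.
have [ls lsS ls_min] := @arg_minP _ R _ l0 (fun l => l \in S) t l0S.
set S' := S :\ ls.
have levelS : level S = level S' + w ls.
  by rewrite /level (big_setD1 ls lsS) /= [w ls + _]addrC addrA.
have := ls_min l0 l0S; have := w_le_delta ls.
have [ls_le | ls_gt] := lerP (t ls) (level S') => w_ls t_ls.
  right; exists S'; last by rewrite (cardsD1 ls S) lsS.
  move=> l; rewrite in_setD1 negb_and negbK => /orP[/eqP-> | lS].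
    by split=> // l' /setD1P[_]; apply: ls_min.
  have [_ t_l] := admS l lS.
  split=> [|l' /setD1P[_]]; last exact: t_l.
  exact: le_trans (t_l ls lsS) ls_le.
left; exists (t ls); split.
- by move=> l /admS [_]; apply.
- exact: ls_min.
- by apply/andP; split; lra.
Qed.

Lemma exists_separating_set : exists S zeta, separates S zeta.
Proof.
suff: forall m (S : {set L}), (#|S| < m)%N -> admissible S -> exists S zeta, separates S zeta.
  by apply; [apply: ltnSn | apply: admissible_setT].
elim=> [//|m IHm] S S_lt admS.
have [[zeta sepS] | [S' admS' S'_lt]] := admissible_step admS.
  by exists S, zeta.
by apply: IHm admS'; apply: leq_trans S'_lt _.
Qed.

End ThresholdSelection.

Lemma switching_rule (R : realDomainType) (r zeta : R) (rho s : bool) :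
  0 < r ->
  (s -> zeta <= (if rho then r else - r)) ->
  (~~ s -> (if rho then r else - r) <= zeta) ->
  [/\ zeta > r -> s = false,
      zeta = r -> s = false \/ s = rho,
      `|zeta| < r -> s = rho,
      zeta = - r -> s = rho \/ s = true &
      zeta < - r -> s = true].
Proof.
move=> r_gt0; case: s; case: rho => /= on off;
  [have := on isT | have := on isT | have := off isT | have := off isT];
  move=> {on off} bound; split=> H; rewrite ?ltr_norml in H;
  try (by left); try (by right); try done;
  try (case/andP: H => H H'); exfalso; lra.
Qed.

Lemma sum_load_sum (R : realFieldType) (n : nat) (L : finType)
    (bus : L -> 'I_n) (dbar : L -> R) (sigma : L -> bool) :
  \sum_j load_sum bus dbar sigma j = \sum_(l | sigma l) dbar l.
Proof.
rewrite (partition_big bus predT) //=; apply: eq_bigr => j _.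
rewrite /load_sum big_mkcondl /=; apply: eq_bigr => l _.
by case: (sigma l); rewrite ?mulr1 ?mulr0.
Qed.

Lemma balanced_equilibrium (R : realFieldType) (n : nat) (L : finType)
    (E Et : rel 'I_n) (bus : L -> 'I_n) (dbar : L -> R)
    (M gamma kappa A tau pL : 'I_n -> R) (B tauE : 'I_n -> 'I_n -> R)
    (sigma : L -> bool) (p : R) :
  connected_digraph E -> connected_digraph Et ->
  (forall i j, E i j -> B i j != 0) ->
  \sum_j (kappa j * p - pL j - load_sum bus dbar sigma j) = 0 ->
  exists eta pM psi, equilibrium E Et bus dbar M gamma kappa A tau pL B tauE
                       sigma eta (fun _ => 0) pM (fun _ => p) psi.
Proof.
move=> connE connEt B_neq0 balance.
have [f div_f] := balanced_is_divergence connE balance.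
have [psi div_psi] :
    is_divergence Et (fun j => - (kappa j * p - pL j - load_sum bus dbar sigma j)).
  by apply: balanced_is_divergence; rewrite // sumrN balance oppr0.
exists (fun i j => f i j / B i j), (fun j => kappa j * p), psi; split.
- by move=> i j _; rewrite /d_eta subrr.
- move=> j; rewrite /d_omega.
  have B_eta i k : E i k -> B i k * (f i k / B i k) = f i k.
    by move=> Eik; rewrite mulrC divfK ?B_neq0.
  rewrite (eq_bigr _ (B_eta j)) (eq_bigr _ (fun i => B_eta i j)).
  have := div_f j; rewrite /divergence mulr0 => flow_j.
  by rewrite (_ : _ + _ = 0) ?mul0r //; lra.
- by move=> j; rewrite /d_pM mulr0 addr0 subrr oppr0 mul0r.
- by move=> i j _; rewrite /d_psi subrr mul0r.
- move=> j; rewrite /d_pc.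
  have := div_psi j; rewrite /divergence => flow_j.
  by rewrite (_ : _ + _ = 0) ?mul0r //; lra.
Qed.

Theorem lemma2 (R : realFieldType) (n : nat) (L : finType)
  (E Et : rel 'I_n) (bus : L -> 'I_n)
  (dbar c : L -> R) (rho : L -> bool)
  (M gamma kappa A tau pL : 'I_n -> R) (B tauE : 'I_n -> 'I_n -> R) :
  (0 < n)%N ->
  connected_digraph E -> oriented E -> connected_digraph Et ->
  (forall l, 0 < dbar l) ->
  (forall l, 0 < c l) ->
  (forall j, 0 < M j) -> (forall j, 0 < gamma j) -> (forall j, 0 < kappa j) ->
  (forall j, 0 < A j) -> (forall j, 0 < tau j) ->
  (forall i j, E i j -> 0 < B i j) -> (forall i j, Et i j -> 0 < tauE i j) ->
  let K := \sum_(j < n) kappa j in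
  let beta := beta_max dbar in
  exists (sigma : L -> bool) (eta : 'I_n -> 'I_n -> R) (omega pM pc : 'I_n -> R)
         (psi : 'I_n -> 'I_n -> R) (pcs zeta : R),
    [/\ equilibrium E Et bus dbar M gamma kappa A tau pL B tauE
          sigma eta omega pM pc psi,
        forall j, pc j = pcs,
        pcs - beta / K <= zeta <= pcs &
        forall l : L,
          [/\ zeta > c l / dbar l -> sigma l = false,
              zeta = c l / dbar l -> sigma l = false \/ sigma l = rho l,
              `|zeta| < c l / dbar l -> sigma l = rho l,
              zeta = - (c l / dbar l) -> sigma l = rho l \/ sigma l = true &
              zeta < - (c l / dbar l) -> sigma l = true]].
Proof.
move=> n_gt0 connE _ connEt dbar_gt0 c_gt0 _ _ kappa_gt0 _ _ B_gt0 _ K beta.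
have K_gt0 : 0 < K.
  rewrite /K (bigD1 (Ordinal n_gt0)) //= ltr_pwDl ?kappa_gt0 ?sumr_ge0 //.
  by move=> j _; apply: ltW.
have beta_ge0 : 0 <= beta by apply: bigmax_ge_id.
have dbar_le l : dbar l / K <= beta / K.
  by rewrite ler_pM2r ?invr_gt0 //; apply: le_bigmax.
pose t l := if rho l then c l / dbar l else - (c l / dbar l).
have [S [zeta [off_le on_ge zeta_bounds]]] := exists_separating_set t
  (\sum_j pL j / K) (divr_ge0 beta_ge0 (ltW K_gt0)) dbar_le.
pose p := level (fun l => dbar l / K) (\sum_j pL j / K) S.
have balance : \sum_j (kappa j * p - pL j - load_sum bus dbar (mem S) j) = 0.
  rewrite !big_split /= !sumrN -mulr_suml -/K sum_load_sum.
  rewrite /p /level -!mulr_suml -mulrDl mulrC divfK ?gt_eqF //; ring.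
have [eta [pM [psi equil]]] := balanced_equilibrium M gamma A tau tauE
  connE connEt (fun i j Eij => lt0r_neq0 (B_gt0 i j Eij)) balance.
exists (mem S), eta, (fun _ => 0), pM, (fun _ => p), psi, p, zeta; split=> // l.
apply: switching_rule; [exact: divr_gt0 | exact: on_ge | exact: off_le].
Qed.
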